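(* Let $q$ be a prime power and let $C\subseteq \mathrm{GF}(q^m)^n$ be a (linear or nonlinear) code containing the all-zero vector, with $n\le m$, $|C|=q^{mk}$ for an integer $1\le k\le n$, and minimum rank distance $d_{\mathrm R}=n-k+1$. Let $r=n-k$ and $t=\lfloor (d_{\mathrm R}-1)/2\rfloor$. For an integer $u$ with $d_{\mathrm R}-t\le u<d_{\mathrm R}$, let $D_u$ be the number of vectors $\mathbf y\in\mathrm{GF}(q^m)^n$ of rank $u$ for which there is a codeword $\mathbf c\in C$ with $\mathrm{rk}(\mathbf y-\mathbf c)\le t$. Then $$D_u<\frac{q^2}{q^2-1}{n\brack u}(q^m-1)^{u-r}V_t,$$ where $V_t=\sum_{i=0}^{t}N_i$.
   Context: $A(m,0)=1$ and $A(m,u)=\prod_{i=0}^{u-1}(q^m-q^i)$ for $u\ge1$; ${n\brack u}=A(n,u)/A(u,u)$ is the Gaussian binomial. For $\mathbf x=(x_0,\dots,x_{n-1})\in\mathrm{GF}(q^m)^n$, $\mathrm{rk}(\mathbf x)$ is the dimension over $\mathrm{GF}(q)$ of the $\mathrm{GF}(q)$-span of its coordinates (equivalently the rank of the $m\times n$ expansion matrix over $\mathrm{GF}(q)$). $N_i={n\brack i}A(m,i)$ is the number of vectors of rank $i$ in $\mathrm{GF}(q^m)^n$. The minimum rank distance of $C$ is the minimum of $\mathrm{rk}(\mathbf c-\mathbf d)$ over distinct codewords. *)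

From HB Require Import structures.
From mathcomp Require Import all_boot all_order all_algebra all_field.
Set Implicit Arguments. Unset Strict Implicit. Unset Printing Implicit Defensive.
Import GRing.Theory Num.Theory.
Local Open Scope ring_scope.

(* GF(q) is a finite field F; GF(q^m) is a finite field extension L of F,
   viewed as a finite type via [finvect_type]. q = #|F|, m = \dim_F L. *)
Definition ext (F : finFieldType) (L : fieldExtType F) := finvect_type L.

Definition qq (F : finFieldType) : nat := #|F|.
Definition mm (F : finFieldType) (L : fieldExtType F) : nat := \dim {:L}.

Definition rk (F : finFieldType) (L : fieldExtType F) (n : nat)
  (x : 'rV[ext L]_n) : nat :=
  \dim (<< [seq (x ord0 i : L) | i <- enum 'I_n] >>%VS).

Definition min_rank_dist (F : finFieldType) (L : fieldExtType F) (n : nat)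
  (C : {set 'rV[ext L]_n}) (d : nat) : Prop :=
  (exists c, exists e, [/\ c \in C, e \in C, c != e & rk (c - e) = d]) /\
  (forall c e, c \in C -> e \in C -> c != e -> (d <= rk (c - e))%N).

Definition Aq (q m u : nat) : rat := \prod_(i < u) ((q%:R) ^+ m - (q%:R) ^+ i).
Definition gauss (q n u : nat) : rat := Aq q n u / Aq q u u.
Definition Nrank (q m n i : nat) : rat := gauss q n i * Aq q m i.
Definition Vball (q m n t : nat) : rat := \sum_(i < t.+1) Nrank q m n i.

Definition Dcount (F : finFieldType) (L : fieldExtType F) (n : nat)
  (C : {set 'rV[ext L]_n}) (t u : nat) : nat :=
  #|[set y : 'rV[ext L]_n | (rk y == u) && [exists c in C, (rk (y - c) <= t)%N]]|.

(* Expanding coordinates over GF(q) turns C into a set of m x n matrices over GF(q)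
   in which distinct codewords are at rank distance > r.  A word y of rank u > t
   within distance t of C is at some exact distance j <= t from a codeword c,
   necessarily c <> 0.  Each pair of factorizations y = Q P and y - c = B A with P, A
   of full row rank gives [Q, -B] [P; A] = c, and there are at least |GL_u| |GL_j|
   such pairs.
   For fixed (P, A), a Singleton-type argument shows that at most q^(m (u + j - r))
   matrices Z satisfy Z [P; A] \in C \ {0}: the last u + j - r columns of Z times the
   column echelon basis of [P; A] determine Z.  This gives
     D_u <= sum_(j <= t) [n, u] [n, j] q^(m (u + j - r)),
   and the bound follows from q^(m j) <= q^2 / (q^2 - 1) A(m, j) for j + 2 <= m (the
   Weierstrass product inequality) and q^(m (u - r)) <= (q^m - 1)^(u - r), the j = 0
   term being strict. *)

From HB Require Import structures.
From mathcomp Require Import all_boot all_order all_algebra all_field.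
From mathcomp Require Import ring lra zify.
Set Implicit Arguments. Unset Strict Implicit. Unset Printing Implicit Defensive.
Import Order.TTheory GRing.Theory Num.Theory.
Local Open Scope ring_scope.

Lemma leq_card_inj_in (T T' : finType) (A : {pred T}) (B : {pred T'}) (f : T -> T') :
  {in A &, injective f} -> {in A, forall x, f x \in B} -> (#|A| <= #|B|)%N.
Proof.
move=> f_inj fAB; rewrite -(card_in_imset f_inj).
by apply/subset_leq_card/subsetP => _ /imsetP[x xA ->]; apply: fAB.
Qed.

Lemma leq_card_fibers (T T' : finType) (A : {pred T}) (B : {pred T'}) (f : T -> T') k :
  {in B, forall y, k <= #|[pred x in A | f x == y]|}%N -> (#|B| * k <= #|A|)%N.
Proof.
move=> fiber_ge; rewrite -[#|A|]sum1_card (partition_big f predT) //=.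
rewrite (bigID (mem B)) /= -sum_nat_const; apply: leq_trans (leq_addr _ _).
apply: leq_sum => y yB; rewrite sum1_card; apply: leq_trans (fiber_ge y yB) _.
by apply/subset_leq_card/subsetP.
Qed.

Lemma card_dep_pairs (T1 T2 : finType) (A : {pred T1}) (P : T1 -> {pred T2}) :
  #|[pred x : T1 * T2 | (x.1 \in A) && (x.2 \in P x.1)]| = (\sum_(a in A) #|P a|)%N.
Proof.
rewrite -sum1_card -(pair_big_dep (mem A) (fun a => mem (P a)) (fun _ _ => 1%N)).
by apply: eq_bigr => a _; rewrite sum1_card.
Qed.

Lemma card_bigcup_le (I T : finType) (P : pred I) (A : I -> {set T}) :
  (#|\bigcup_(i | P i) A i| <= \sum_(i | P i) #|A i|)%N.
Proof.
elim/big_rec2: _ => [|i U s _ IH]; first by rewrite cards0.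
exact: leq_trans (leq_card_setU _ _) (leq_add _ IH).
Qed.

Section RowFree.
Variable F : finFieldType.

Lemma card_submx m n (A : 'M[F]_(m, n)) :
  row_free A -> #|[pred v : 'rV[F]_n | (v <= A)%MS]| = (#|F| ^ m)%N.
Proof.
move=> freeA; have -> : (#|F| ^ m = #|{: 'rV[F]_m}|)%N by rewrite card_mx mul1n.
rewrite -(card_image (row_free_inj freeA)).
by apply: eq_card => v; rewrite inE; apply/submxP/imageP => [[u ->]|[u _ ->]]; exists u.
Qed.

Lemma row_free_col_mx1 m n (v : 'rV[F]_n) (A : 'M[F]_(m, n)) :
  row_free (col_mx v A) = row_free A && ~~ (v <= A)%MS.
Proof.
rewrite /row_free -addsmxE add1n.
have [vA | nvA] := boolP (v <= A)%MS.
  by rewrite andbF (addsmx_idPr vA) ltn_eqF // ltnS rank_leq_row.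
suff -> : \rank (v + A)%MS = (\rank A).+1 by rewrite eqSS andbT.
apply/eqP; rewrite eqn_leq; apply/andP; split.
  exact: leq_trans (mxrank_adds_leqif v A).1 (leq_add (rank_leq_row v) (leqnn _)).
by apply: rank_ltmx; rewrite ltmxE addsmxSr addsmx_sub submx_refl andbT.
Qed.
Lemma card_row_free_add1 m n : (m <= n)%N ->
  #|[pred A : 'M[F]_(1 + m, n) | row_free A]|
    = (#|[pred A : 'M[F]_(m, n) | row_free A]| * (#|F| ^ n - #|F| ^ m))%N.
Proof.
move=> le_mn; pose split_top (M : 'M[F]_(1 + m, n)) := (dsubmx M, usubmx M).
have split_inj : injective split_top.
  by move=> M1 M2 [eq_d eq_u]; rewrite -[M1]vsubmxK -[M2]vsubmxK eq_d eq_u.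
pose outside (A : 'M[F]_(m, n)) := [pred v : 'rV[F]_n | ~~ (v <= A)%MS].
transitivity #|[pred x | (x.1 \in [pred A | row_free A]) && (x.2 \in outside x.1)]|.
  rewrite -(card_image split_inj); apply: eq_card => -[A v].
  have -> : (A, v) = split_top (col_mx v A) by rewrite /split_top col_mxKd col_mxKu.
  by rewrite mem_image // !inE /split_top col_mxKd col_mxKu row_free_col_mx1.
rewrite (card_dep_pairs _ outside) -sum_nat_const; apply: eq_bigr => A free_A.
have := cardC [pred v : 'rV[F]_n | (v <= A)%MS].
by rewrite card_submx // card_mx mul1n => <-; rewrite addKn.
Qed.

Lemma card_row_free m n : (m <= n)%N ->
  #|[pred A : 'M[F]_(m, n) | row_free A]|%:R = Aq #|F| n m :> rat.
Proof.
elim: m => [_ | m IHm lt_mn].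
  have -> : #|[pred A : 'M[F]_(0, n) | row_free A]| = #|{: 'M[F]_(0, n)}|.
    by apply: eq_card => A; rewrite !inE /row_free -leqn0 rank_leq_row.
  by rewrite card_mx /Aq big_ord0.
rewrite (card_row_free_add1 (ltnW lt_mn)) natrM (IHm (ltnW lt_mn)) /Aq big_ord_recr /=.
by rewrite natrB ?natrX // leq_exp2l ?card_finNzRing_gt1 // ltnW.
Qed.
End RowFree.

Section Factorizations.
Variables (F : finFieldType) (m n : nat).

Definition factorizations k (y : 'M[F]_(m, n)) :=
  [set QP : 'M[F]_(m, k) * 'M[F]_(k, n) | row_free QP.2 && (QP.1 *m QP.2 == y)].

Lemma card_factorizations_ge k (y : 'M[F]_(m, n)) : \rank y = k ->
  (#|[pred g : 'M[F]_k | row_free g]| <= #|factorizations k y|)%N.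
Proof.
move=> <-; pose split_base g := (col_base y *m invmx g, g *m row_base y).
apply: (@leq_card_inj_in _ _ _ _ split_base).
  by move=> g1 g2 _ _ [_ /(row_free_inj (row_base_free y))].
move=> g; rewrite !inE /= => free_g; rewrite /row_free mxrankMfree ?row_base_free //.
rewrite -mulmxA (mulmxA (invmx g)) mulVmx ?mul1mx ?mulmx_base ?eqxx ?andbT //.
by rewrite -row_free_unit.
Qed.

End Factorizations.

Section EchelonProjection.
Variables (F : finFieldType) (m n r N' : nat) (M : 'M[F]_(r + N', n)).

Lemma rank_mulmx_rsubmx_ebase0 (X : 'M[F]_(m, r + N')) :
  rsubmx (X *m col_ebase M) = 0 -> (\rank (X *m M) <= r)%N.
Proof.
move=> X0; rewrite -(mulmx_ebase M) !mulmxA (leq_trans (mxrankM_maxl _ _)) //.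
rewrite (leq_trans (mxrankM_maxl _ _)) // -[X *m _]hsubmxK X0 rank_row_mx0.
exact: rank_leq_col.
Qed.

Lemma mulmx_rsubmx_ebase0_eq0 (X : 'M[F]_(m, r + N')) : (r <= \rank M)%N ->
  rsubmx (X *m col_ebase M) = 0 -> X *m M = 0 -> X = 0.
Proof.
move=> le_r_rkM X0 XM0; set D := X *m col_ebase M.
have le_r_n : (r <= n)%N := leq_trans le_r_rkM (rank_leq_col M).
have D_lsub : D = row_mx (lsubmx D) 0 by rewrite -X0 hsubmxK.
have Dp0 : D *m (pid_mx (\rank M) : 'M_(r + N', n)) = 0.
  have XM : X *m M = D *m pid_mx (\rank M) *m row_ebase M.
    by rewrite -{1}(mulmx_ebase M) /D !mulmxA.
  move/(congr1 (mulmx^~ (invmx (row_ebase M)))): XM0; rewrite XM.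
  by rewrite mulmxK ?row_ebase_unit // mul0mx.
have lD0 : lsubmx D = 0.
  have <- : D *m pid_mx (\rank M) *m (pid_mx r : 'M_(n, r)) = lsubmx D.
    rewrite -mulmxA mul_pid_mx (minn_idPr le_r_rkM) (minn_idPr le_r_n) pid_mx_col.
    by rewrite {1}D_lsub mul_row_col mulmx1 mul0mx addr0.
  by rewrite Dp0 mul0mx.
move/(congr1 (mulmx^~ (invmx (col_ebase M)))): D_lsub.
by rewrite lD0 row_mx0 /D mulmxK ?col_ebase_unit // mul0mx.
Qed.
End EchelonProjection.

Lemma card_preim_mulmx_le (F : finFieldType) m n N r (M : 'M[F]_(N, n))
    (S : {pred 'M[F]_(m, n)}) :
  {in S &, forall a b, a != b -> r < \rank (a - b)%R}%N ->
  {in S, forall a, r < \rank a}%N ->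
  (#|[pred X : 'M[F]_(m, N) | X *m M \in S]| * #|F| ^ (m * r) <= #|F| ^ (m * N))%N.
Proof.
move=> dS rkS; have [lt_rkM_r | le_r_rkM] := ltnP (\rank M) r.
  rewrite eq_card0 ?mul0n // => X; rewrite !inE; apply/negP => /rkS.
  by rewrite ltnNge (leq_trans (mxrankM_maxr _ _) (ltnW lt_rkM_r)).
have [N' eN] : exists N', N = (r + N')%N.
  by exists (N - r)%N; rewrite subnKC // (leq_trans le_r_rkM (rank_leq_row M)).
subst N; rewrite mulnDr expnD mulnC leq_mul2l; apply/orP; right.
have -> : (#|F| ^ (m * N') = #|{: 'M[F]_(m, N')}|)%N by rewrite card_mx.
apply: (@leq_card_inj_in _ _ _ _ (fun X => rsubmx (X *m col_ebase M))) => // X1 X2.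
rewrite !inE => SX1 SX2 /eqP; rewrite -subr_eq0 -linearB /= -mulmxBl => /eqP X0.
have eqXM : X1 *m M = X2 *m M.
  apply/eqP; apply: contraTT (rank_mulmx_rsubmx_ebase0 X0) => /(dS _ _ SX1 SX2).
  by rewrite mulmxBl -ltnNge.
apply/eqP; rewrite -subr_eq0; apply/eqP; apply: (mulmx_rsubmx_ebase0_eq0 le_r_rkM X0).
by rewrite mulmxBl eqXM subrr.
Qed.

Lemma Aq_gt0 q m j : (1 < q)%N -> (j <= m)%N -> 0 < Aq q m j.
Proof.
move=> q1 jm; apply: prodr_gt0 => i _; rewrite subr_gt0 ltr_eXn2l ?ltr1n //.
exact: leq_trans (ltn_ord i) jm.
Qed.

Lemma gauss_gt0 q n j : (1 < q)%N -> (j <= n)%N -> 0 < gauss q n j.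
Proof. by move=> q1 jn; rewrite divr_gt0 ?Aq_gt0. Qed.

Lemma weierstrass_prod_ineq (R : realDomainType) (Q : R) (a : nat -> R) j :
  0 <= Q -> (forall i, (i < j)%N -> 0 <= a i <= Q) ->
  Q ^+ j * (Q - \sum_(i < j) a i) <= Q * \prod_(i < j) (Q - a i).
Proof.
move=> Q0; elim: j => [|j IH] a_bnd; first by rewrite !big_ord0 subr0 mulr1 mul1r.
have /andP[aj0 ajQ] := a_bnd j (ltnSn j).
have S0 : 0 <= \sum_(i < j) a i by apply: sumr_ge0 => i _; case/andP: (a_bnd i (ltnW (ltn_ord i))).
rewrite !big_ord_recr /= [in X in _ <= X]mulrA.
have IH' := IH (fun i lt_ij => a_bnd i (ltnW lt_ij)).
have Qaj : 0 <= Q - a j by rewrite subr_ge0.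
apply: le_trans _ (ler_wpM2r Qaj IH'); rewrite -subr_ge0.
set S := \sum_(i < j) a i; rewrite exprS.
have -> : Q ^+ j * (Q - S) * (Q - a j) - Q * Q ^+ j * (Q - (S + a j)) = Q ^+ j * S * a j by ring.
by rewrite !mulr_ge0 ?exprn_ge0.
Qed.

Lemma sum_exprn_lt (R : realDomainType) (x : R) j :
  2 <= x -> \sum_(i < j) x ^+ i < x ^+ j.
Proof.
move=> x2; have := subrX1 x j.
have S0 : 0 <= \sum_(i < j) x ^+ i by apply: sumr_ge0 => i _; rewrite exprn_ge0 //; lra.
set S := \sum_(i < j) _ => geom.
have : 0 <= (x - 2) * S by rewrite mulr_ge0 // subr_ge0.
lra.
Qed.

Lemma exprn_le_Aq q m j : (1 < q)%N -> (j + 2 <= m)%N ->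
  (q%:R ^+ m) ^+ j <= q%:R ^+ 2 / (q%:R ^+ 2 - 1) * Aq q m j :> rat.
Proof.
move=> q1 jm; set x : rat := q%:R; set Q := x ^+ m; set s := \sum_(i < j) x ^+ i.
have x2 : 2 <= x by rewrite ler_nat.
have x2_4 : 4 <= x ^+ 2 by rewrite expr2; nra.
have Q0 : 0 < Q by rewrite exprn_gt0 //; lra.
have sQ : s * x ^+ 2 <= Q.
  apply: le_trans (_ : x ^+ j * x ^+ 2 <= Q); last by rewrite -exprD ler_weXn2l //; lra.
  by apply: ler_wpM2r; [lra | exact: ltW (sum_exprn_lt j x2)].
have W : Q ^+ j * (Q - s) <= Q * Aq q m j.
  apply: (weierstrass_prod_ineq (ltW Q0)) => i lt_ij.
  rewrite exprn_ge0 ?ler_weXn2l /=; by [lia | lra].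
rewrite mulrAC ler_pdivlMr; last by lra.
rewrite -(ler_pM2l Q0); apply: le_trans (_ : x ^+ 2 * (Q ^+ j * (Q - s)) <= _).
  rewrite -subr_ge0.
  have -> : x ^+ 2 * (Q ^+ j * (Q - s)) - Q * (Q ^+ j * (x ^+ 2 - 1))
    = Q ^+ j * (Q - s * x ^+ 2) by ring.
  by rewrite mulr_ge0 ?exprn_ge0 ?subr_ge0 // ltW.
by rewrite [in X in _ <= X]mulrCA ler_wpM2l //; lra.
Qed.

Lemma divr_exprn_le_exprz (R : realFieldType) (Q : R) u r : 1 < Q -> (u <= r)%N ->
  Q ^+ u / Q ^+ r <= (Q - 1) ^ (u%:Z - r%:Z).
Proof.
move=> Q1 ur; have Q0 : 0 < Q by lra.
have Q1_0 : 0 < Q - 1 by lra.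
rewrite -[u%:Z - r%:Z]opprB subzn // -exprnN -[in Q ^+ r](subnKC ur) exprD invfM mulrA.
rewrite divff ?mul1r ?expf_neq0 ?gt_eqF //.
rewrite lef_pV2 ?posrE ?exprn_gt0 // lerXn2r ?nnegrE ?ltW //; lra.
Qed.

Lemma sum_gauss_exprn_lt_Vball (q m n r t u : nat) :
  (1 < q)%N -> (0 < m)%N -> (u <= r)%N -> (u <= n)%N -> (t <= n)%N ->
  (forall j, (0 < j <= t)%N -> (j + 2 <= m)%N) ->
  \sum_(j < t.+1) gauss q n u * gauss q n j * ((q%:R ^+ m) ^+ (u + j) / (q%:R ^+ m) ^+ r)
  < q%:R ^+ 2 / (q%:R ^+ 2 - 1) * gauss q n u * (q%:R ^+ m - 1) ^ (u%:Z - r%:Z)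
    * Vball q m n t.
Proof.
move=> q1 m0 ur un tn jm; set Q : rat := q%:R ^+ m.
set k := _ / _; set E := (Q - 1) ^ _.
have q_ge2 : 2 <= q%:R :> rat by rewrite ler_nat.
have q2_ge4 : 4 <= q%:R ^+ 2 :> rat by rewrite -natrX ler_nat; nia.
have k_gt1 : 1 < k by rewrite ltr_pdivlMr; lra.
have Q1 : 1 < Q by rewrite exprn_egt1 -?lt0n //; lra.
have ratio_le : Q ^+ u / Q ^+ r <= E by exact: divr_exprn_le_exprz.
have Q0 : 0 < Q := lt_trans ltr01 Q1.
have ratio_gt0 : 0 < Q ^+ u / Q ^+ r by apply: divr_gt0; exact: exprn_gt0.
have gauss_prod_gt0 (j : 'I_t.+1) : 0 < gauss q n u * gauss q n j.
  by rewrite mulr_gt0 ?gauss_gt0 // -ltnS (leq_trans (ltn_ord j)).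
have -> : k * gauss q n u * E * Vball q m n t
    = \sum_(j < t.+1) gauss q n u * gauss q n j * (k * Aq q m j * E).
  by rewrite /Vball mulr_sumr; apply: eq_bigr => j _; rewrite /Nrank; ring.
rewrite !big_ord_recl ltr_leD //.
  rewrite ltr_pM2l // addn0 /Aq big_ord0 mulr1.
  by apply: (le_lt_trans ratio_le); rewrite ltr_pMl // (lt_le_trans ratio_gt0 ratio_le).
apply: ler_sum => j _; rewrite ler_pM2l // exprD mulrAC [X in X <= _]mulrC.
apply: ler_pM => //; [exact: exprn_ge0 (ltW Q0) | exact: ltW ratio_gt0 |].
by apply: exprn_le_Aq => //; apply: jm; rewrite /= ltn_ord.
Qed.

Section RankMetricCode.
Variables (F : finFieldType) (m n r : nat) (C : {set 'M[F]_(m, n)}).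
Hypotheses (C0 : 0 \in C) (dC : {in C &, forall a b, a != b -> r < \rank (a - b)%R}%N).

Definition near_code u t := [set y : 'M[F]_(m, n) |
  (\rank y == u) && [exists c in C, (\rank (y - c)%R <= t)%N]].

Definition near_code_at u j := [set y : 'M[F]_(m, n) |
  (\rank y == u) && [exists c in C :\ 0, \rank (y - c)%R == j]].

Definition codeword_splittings u j :=
  [set x : ('M[F]_(u, n) * 'M[F]_(j, n)) * 'M[F]_(m, u + j) |
   [&& row_free x.1.1, row_free x.1.2 & x.2 *m col_mx x.1.1 x.1.2 \in C :\ 0]].

Lemma card_near_code_le t u : (t < u)%N ->
  (#|near_code u t| <= \sum_(j < t.+1) #|near_code_at u j|)%N.
Proof.
move=> lt_tu; apply: leq_trans (card_bigcup_le _ _); apply/subset_leq_card/subsetP => y.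
rewrite inE => /andP[/eqP rk_y /existsP[c /andP[cC le_yc_t]]].
apply/bigcupP; exists (Ordinal (le_yc_t : \rank (y - c)%R < t.+1)%N) => //.
rewrite inE rk_y eqxx /=; apply/existsP; exists c; rewrite !inE cC eqxx !andbT.
by apply/negP => /eqP c0; move: le_yc_t; rewrite c0 subr0 rk_y leqNgt lt_tu.
Qed.

Lemma card_near_code_at_le u j :
  (#|near_code_at u j| * (#|[pred g : 'M[F]_u | row_free g]| * #|[pred g : 'M[F]_j | row_free g]|)
    <= #|codeword_splittings u j|)%N.
Proof.
apply: (@leq_card_fibers _ _ _ _ (fun x => lsubmx x.2 *m x.1.1)) => y.
rewrite inE => /andP[/eqP rk_y /existsP[c /andP[/setD1P[c_nz cC] /eqP rk_yc]]].
apply: leq_trans (leq_mul (card_factorizations_ge rk_y) (card_factorizations_ge rk_yc)) _.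
rewrite -cardsX; apply: (@leq_card_inj_in _ _ _ _
  (fun QPBA => ((QPBA.1.2, QPBA.2.2), row_mx QPBA.1.1 (- QPBA.2.1)))).
  by move=> [[Q1 P1] [B1 A1]] [[Q2 P2] [B2 A2]] _ _ [-> -> /eq_row_mx[-> /oppr_inj ->]].
move=> [[Q P] [B A]]; rewrite !inE /= => /andP[/andP[free_P /eqP QP_y] /andP[free_A /eqP BA_yc]].
by rewrite free_P free_A mul_row_col mulNmx QP_y BA_yc subKr c_nz cC row_mxKl QP_y eqxx.
Qed.

Lemma card_codeword_splittings_le u j :
  (#|codeword_splittings u j| * #|F| ^ (m * r)
    <= #|[pred P : 'M[F]_(u, n) | row_free P]| * #|[pred A : 'M[F]_(j, n) | row_free A]|
       * #|F| ^ (m * (u + j)))%N.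
Proof.
set FR := setX [set P : 'M[F]_(u, n) | row_free P] [set A : 'M[F]_(j, n) | row_free A].
have -> : #|codeword_splittings u j|
    = (\sum_(PA in FR) #|[pred Z : 'M[F]_(m, u + j) | Z *m col_mx PA.1 PA.2 \in C :\ 0%R]|)%N.
  rewrite -(card_dep_pairs FR (fun PA => [pred Z | Z *m col_mx PA.1 PA.2 \in C :\ 0])).
  by apply: eq_card => -[[P A] Z]; rewrite !inE /= andbA.
have -> : (#|[pred P : 'M[F]_(u, n) | row_free P]| * #|[pred A : 'M[F]_(j, n) | row_free A]|
    = #|FR|)%N by rewrite cardsX !cardsE.
rewrite big_distrl -sum_nat_const; apply: leq_sum => -[P A] _.
apply: card_preim_mulmx_le => [a b /setD1P[_ aC] /setD1P[_ bC]|a /setD1P[a_nz aC]].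
  exact: dC.
by have := dC aC C0 a_nz; rewrite subr0.
Qed.

Lemma card_near_code_le_sum t u : (t < u)%N -> (u <= n)%N ->
  (#|near_code u t|%:R : rat) <= \sum_(j < t.+1)
    gauss #|F| n u * gauss #|F| n j * ((#|F|%:R ^+ m) ^+ (u + j) / (#|F|%:R ^+ m) ^+ r).
Proof.
move=> lt_tu le_un; have q1 : (1 < #|F|)%N := card_finNzRing_gt1 F.
set Q : rat := #|F|%:R ^+ m.
apply: le_trans (_ : (\sum_(j < t.+1) #|near_code_at u j|)%N%:R <= _).
  by rewrite ler_nat card_near_code_le.
rewrite natr_sum; apply: ler_sum => j _.
have le_jn : (j <= n)%N by have := ltn_ord j; lia.
have := leq_trans (leq_mul (card_near_code_at_le u j) (leqnn _)) (card_codeword_splittings_le u j).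
rewrite -(ler_nat rat) !natrM !card_row_free // !natrX !exprM -/Q => count.
have Q0 : 0 < Q by rewrite exprn_gt0 // ltr0n ltnW.
have [Auu_gt0 Ajj_gt0] := (Aq_gt0 q1 (leqnn u), Aq_gt0 q1 (leqnn j)).
have -> : gauss #|F| n u * gauss #|F| n j * (Q ^+ (u + j) / Q ^+ r)
    = Aq #|F| n u * Aq #|F| n j * Q ^+ (u + j) / (Aq #|F| u u * Aq #|F| j j * Q ^+ r).
  by rewrite /gauss; field; rewrite !gt_eqF // exprn_gt0.
rewrite ler_pdivlMr; first by rewrite mulrA.
by rewrite !mulr_gt0 // exprn_gt0.
Qed.
End RankMetricCode.

Section Expansion.
Variables (F : finFieldType) (L : fieldExtType F) (n : nat).
Import VectorInternalTheory.

Definition expand (x : 'rV[ext L]_n) : 'M[F]_(dim L, n) :=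
  (\matrix_(i < n) v2r (x ord0 i : L))^T.

Lemma expandB (a b : 'rV[ext L]_n) : expand (a - b) = expand a - expand b.
Proof.
apply/matrixP => j i; rewrite !mxE.
by rewrite [v2r _](linearB v2r (a ord0 i : L) (b ord0 i : L)) !mxE.
Qed.

Lemma expand0 : expand 0 = 0.
Proof. by apply/matrixP => j i; rewrite !mxE linear0 mxE. Qed.

Lemma expand_inj : injective expand.
Proof.
move=> a b /matrixP eq_ab; apply/rowP => i; apply: v2r_inj; apply/rowP => j.
by have := eq_ab j i; rewrite !mxE.
Qed.

Lemma rk_expand x : rk x = \rank (expand x).
Proof.
rewrite mxrank_tr /rk /dimv [span]unlock /span_expanded_def mx2vsK.
set X := [seq _ | _ <- _]; have sX : size X = n by rewrite size_map size_enum_ord.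
suff -> : b2mx (in_tuple X) = castmx (esym sX, erefl) (\matrix_i v2r (x ord0 i : L)).
  by rewrite eqmx_cast.
apply/matrixP => i j; rewrite castmxE !mxE /= (tnth_nth 0) /X.
have lt_in : (i < n)%N by rewrite -sX.
rewrite (nth_map (cast_ord sX i)) ?size_enum_ord //.
by congr (v2r (x _ _) _ _); apply: val_inj; rewrite /= ?nth_enum_ord.
Qed.

Lemma leq_Dcount_near_code (C : {set 'rV[ext L]_n}) t u :
  (Dcount C t u <= #|near_code [set expand c | c in C] u t|)%N.
Proof.
apply: (@leq_card_inj_in _ _ _ _ expand) => [? ? _ _|y]; first exact: expand_inj.
rewrite !inE -rk_expand => /andP[-> /existsP[c /andP[cC le_t]]].
by apply/existsP; exists (expand c); rewrite imset_f // -expandB -rk_expand le_t.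
Qed.
End Expansion.

Theorem proposition4 (F : finFieldType) (L : fieldExtType F) (n k u : nat)
  (C : {set 'rV[ext L]_n}) :
  0 \in C ->
  (n <= mm L)%N ->
  (1 <= k <= n)%N ->
  #|C| = (qq F ^ (mm L * k))%N ->
  min_rank_dist C (n - k + 1) ->
  let d := (n - k + 1)%N in
  let r := (n - k)%N in
  let t := (d.-1)./2 in
  (d - t <= u < d)%N ->
  (Dcount C t u)%:R <
    ((qq F)%:R ^+ 2 / ((qq F)%:R ^+ 2 - 1)) * gauss (qq F) n u
    * (((qq F)%:R ^+ (mm L) - 1) ^ (u%:Z - r%:Z))
    * Vball (qq F) (mm L) n t :> rat.
Proof.
move=> C0 le_nm /andP[k_ge1 le_kn] _ [_ dC] d r t /andP[le_du lt_ud].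
have mE : mm L = dim L by rewrite /mm dimvf.
rewrite /qq mE; rewrite mE in le_nm.
pose Cm := [set expand c | c in C].
have Cm0 : 0 \in Cm by apply/imsetP; exists 0; rewrite ?expand0.
have dCm : {in Cm &, forall a b, a != b -> r < \rank (a - b)%R}%N.
  move=> _ _ /imsetP[c cC ->] /imsetP[e eC ->] neq; rewrite -expandB -rk_expand.
  by rewrite -addn1 dC //; apply: contraNneq neq => ->.
have [lt_tu le_ur le_un le_tn] : [/\ t < u, u <= r, u <= n & t <= n]%N.
  by rewrite /t /d /r in le_du lt_ud *; split; lia.
have m_gt0 : (0 < dim L)%N by apply: leq_trans le_nm; lia.
have j_small j : (0 < j <= t)%N -> (j + 2 <= dim L)%N by rewrite /t /d; lia.
apply: le_lt_trans
  (sum_gauss_exprn_lt_Vball (card_finNzRing_gt1 F) m_gt0 le_ur le_un le_tn j_small).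
apply: le_trans _ (card_near_code_le_sum Cm0 dCm lt_tu le_un).
by rewrite ler_nat leq_Dcount_near_code.
Qed.
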